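(* Let $G=\operatorname{Gp}\langle X\mid R\rangle$ and let $\Re$ be a complete rewriting system for $G$ on $X\cup X^{-1}$ satisfying the condition $C^{+}$. Then for all positive words $u,v\in X^{*}$: $u\equiv_{\Re}v$ if and only if $u\equiv_{\Re^{+}}v$.
   Context: A rewriting system on an alphabet $\Sigma$ is a set of rules $l\rightarrow r$ in $\Sigma^{*}\times\Sigma^{*}$; $ulv$ reduces to $urv$. Complete means terminating (no infinite reduction chains) and confluent (words with a common ancestor have a common descendant). $\equiv_{\Re}$ is the congruence generated by $\Re$. A rewriting system for $G$ is one on $X\cup X^{-1}$ whose congruence equals the congruence generated by $R\cup\{xx^{-1}=1,x^{-1}x=1:x\in X\}$. A word is positive if it lies in $X^{*}$ (the empty word counts as positive). $\Re^{+}$ is the set of rules of $\Re$ with positive left-hand side. $\Re$ satisfies $C^{+}$ if $\Re^{+}\neq\emptyset$ and every rule of $\Re$ with positive left-hand side has positive right-hand side. *)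

From Stdlib Require Import List Relations.
Import ListNotations.
Set Implicit Arguments.

(* A letter of X ∪ X^{-1}: [inl x] is the generator x, [inr x] is x^{-1}. *)
Definition letter (X : Type) : Type := (X + X)%type.
Definition word (X : Type) : Type := list (letter X).

Definition rsys (X : Type) : Type := word X -> word X -> Prop.

Definition step X (Re : rsys X) (w w' : word X) : Prop :=
  exists u l r v, Re l r /\ w = u ++ l ++ v /\ w' = u ++ r ++ v.

Definition reduces X (Re : rsys X) : relation (word X) :=
  clos_refl_trans (word X) (step Re).

Definition terminating X (Re : rsys X) : Prop :=
  ~ exists f : nat -> word X, forall n, step Re (f n) (f (S n)).

Definition confluent X (Re : rsys X) : Prop :=
  forall w w1 w2, reduces Re w w1 -> reduces Re w w2 ->
    exists w3, reduces Re w1 w3 /\ reduces Re w2 w3.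

Definition complete X (Re : rsys X) : Prop := terminating Re /\ confluent Re.

Inductive congr X (Re : rsys X) : word X -> word X -> Prop :=
| congr_base : forall l r, Re l r -> congr Re l r
| congr_refl : forall w, congr Re w w
| congr_sym : forall w w', congr Re w w' -> congr Re w' w
| congr_trans : forall w1 w2 w3, congr Re w1 w2 -> congr Re w2 w3 -> congr Re w1 w3
| congr_ctx : forall u v w w', congr Re w w' -> congr Re (u ++ w ++ v) (u ++ w' ++ v).

Definition group_rels X (R : rsys X) : rsys X :=
  fun l r => R l r \/
    exists x : X, (l = [inl x; inr x] \/ l = [inr x; inl x]) /\ r = [].

Definition rsys_for_group X (R Re : rsys X) : Prop :=
  forall u v, congr Re u v <-> congr (group_rels R) u v.

Definition is_pos_letter X (a : letter X) : Prop := exists x, a = inl x.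

Definition positive X (w : word X) : Prop := Forall (@is_pos_letter X) w.

Definition pos_part X (Re : rsys X) : rsys X :=
  fun l r => Re l r /\ positive l.

Definition Cplus X (Re : rsys X) : Prop :=
  (exists l r, pos_part Re l r) /\
  (forall l r, Re l r -> positive l -> positive r).

From Stdlib Require Import List Relations.
Import ListNotations.
Set Implicit Arguments.

(* Positive words u, v that are congruent modulo a confluent
   rewriting system Re have a common descendant w (Church–Rosser property).
   Under condition C+, every rule applicable to a positive word has a positive
   left-hand side and hence a positive right-hand side, so a reduction starting
   at a positive word only uses rules of Re^+ and stays among positive words.
   Thus u ->* w <-* v is in fact a reduction in Re^+, giving u ≡_{Re^+} v;
   the converse holds since Re^+ is a subsystem of Re. *)

Lemma step_ctx X (Re : rsys X) u v w w' :
  step Re w w' -> step Re (u ++ w ++ v) (u ++ w' ++ v).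
Proof.
  intros [u0 [l [r [v0 [Hlr [-> ->]]]]]].
  exists (u ++ u0), l, r, (v0 ++ v); split; [exact Hlr|].
  split; rewrite !app_assoc; reflexivity.
Qed.

Lemma reduces_ctx X (Re : rsys X) u v w w' :
  reduces Re w w' -> reduces Re (u ++ w ++ v) (u ++ w' ++ v).
Proof.
  induction 1 as [w w' Hstep | w | w1 w2 w3 _ IH12 _ IH23].
  - apply rt_step, step_ctx, Hstep.
  - apply rt_refl.
  - exact (rt_trans _ _ _ _ _ IH12 IH23).
Qed.

Lemma step_rule X (Re : rsys X) l r : Re l r -> step Re l r.
Proof.
  intros Hlr; exists [], l, r, []; split; [exact Hlr|].
  simpl; rewrite !app_nil_r; split; reflexivity.
Qed.

Lemma reduces_congr X (Re : rsys X) w w' : reduces Re w w' -> congr Re w w'.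
Proof.
  induction 1 as [w w' [u [l [r [v [Hlr [-> ->]]]]]] | w | w1 w2 w3 _ IH12 _ IH23].
  - apply congr_ctx, congr_base, Hlr.
  - apply congr_refl.
  - exact (congr_trans IH12 IH23).
Qed.

Lemma congr_mono X (Re1 Re2 : rsys X) :
  (forall l r, Re1 l r -> Re2 l r) ->
  forall w w', congr Re1 w w' -> congr Re2 w w'.
Proof.
  intros Hsub w w'; induction 1.
  - apply congr_base, Hsub; assumption.
  - apply congr_refl.
  - apply congr_sym; assumption.
  - eapply congr_trans; eassumption.
  - apply congr_ctx; assumption.
Qed.

Lemma confluent_church_rosser X (Re : rsys X) : confluent Re ->
  forall u v, congr Re u v -> exists w, reduces Re u w /\ reduces Re v w.
Proof.
  intros Hconf u v H; induction H
    as [l r Hlr | w | w w' _ [z [Hwz Hw'z]] | w1 w2 w3 _ [z1 [H1 H21]] _ [z2 [H22 H3]]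
       | u v w w' _ [z [Hwz Hw'z]]].
  - exists r; split; [apply rt_step, step_rule, Hlr | apply rt_refl].
  - exists w; split; apply rt_refl.
  - exists z; split; assumption.
  - destruct (Hconf _ _ _ H21 H22) as [z [Hz1 Hz2]].
    exists z; split; eapply rt_trans; eassumption.
  - exists (u ++ z ++ v); split; apply reduces_ctx; assumption.
Qed.

Definition preserves_positivity X (Re : rsys X) : Prop :=
  forall l r, Re l r -> positive l -> positive r.

Section PositiveReductions.

Variables (X : Type) (Re : rsys X).
Hypothesis Hpos : preserves_positivity Re.

(* A step from a positive word uses a rule of Re^+ and yields a positive word:
   the left-hand side is a factor of a positive word, hence positive. *)
Lemma step_positive w w' :
  step Re w w' -> positive w -> step (pos_part Re) w w' /\ positive w'.
Proof.
  intros [u [l [r [v [Hlr [-> ->]]]]]] Hw.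
  apply Forall_app in Hw as [Hu Hlv]; apply Forall_app in Hlv as [Hl Hv].
  split.
  - exists u, l, r, v; repeat split; assumption.
  - apply Forall_app; split; [exact Hu|].
    apply Forall_app; split; [exact (Hpos Hlr Hl) | exact Hv].
Qed.

Lemma reduces_positive w w' :
  reduces Re w w' -> positive w -> reduces (pos_part Re) w w' /\ positive w'.
Proof.
  induction 1 as [w w' Hstep | w | w1 w2 w3 _ IH12 _ IH23]; intros Hw.
  - destruct (step_positive Hstep Hw) as [Hstep' Hw'].
    split; [apply rt_step, Hstep' | exact Hw'].
  - split; [apply rt_refl | exact Hw].
  - destruct (IH12 Hw) as [H12 Hw2]; destruct (IH23 Hw2) as [H23 Hw3].
    split; [exact (rt_trans _ _ _ _ _ H12 H23) | exact Hw3].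
Qed.

End PositiveReductions.

Theorem lemma3p7 (X : Type) (R Re : rsys X) :
  rsys_for_group R Re -> complete Re -> Cplus Re ->
  forall u v : word X, positive u -> positive v ->
    (congr Re u v <-> congr (pos_part Re) u v).
Proof.
  intros _ [_ Hconf] [_ Hpos] u v Hu Hv; split.
  - intros Huv.
    destruct (confluent_church_rosser Hconf Huv) as [w [Huw Hvw]].
    destruct (reduces_positive Hpos Huw Hu) as [Huw' _].
    destruct (reduces_positive Hpos Hvw Hv) as [Hvw' _].
    exact (congr_trans (reduces_congr Huw') (congr_sym (reduces_congr Hvw'))).
  - apply congr_mono; intros l r [Hlr _]; exact Hlr.
Qed.
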